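(* Let $v=[q;w_1,\ldots,w_n]$ be a WVG and let $v'$ be obtained by splitting player $i$ into two sub-players $i',i''$ with nonnegative weights $w_{i'}+w_{i''}=w_i$. Then $\eta_{i'}(v')+\eta_{i''}(v')=2\eta_i(v)$, and for every player $x\neq i$, $\eta_x(v)\le \eta_x(v')$.
   Context: A weighted voting game (WVG) $v=[q;w_1,\ldots,w_n]$ has player set $N=\{1,\ldots,n\}$, nonnegative weights $w_j$ and quota $q$ with $0<q\le \sum_j w_j$; a coalition $S\subseteq N$ is winning iff $\sum_{j\in S}w_j\ge q$. Player $j$ is critical in a coalition $S$ if $S$ is winning and $S\setminus\{j\}$ is losing; $\eta_j(v)$ is the number of coalitions in which $j$ is critical. Splitting player $i$ into sub-players with nonnegative weights summing to $w_i$ produces the WVG with the same quota in which $i$ is replaced by the sub-players and all other players keep their weights. *)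

From HB Require Import structures.
From mathcomp Require Import all_boot all_order all_algebra.
Set Implicit Arguments. Unset Strict Implicit. Unset Printing Implicit Defensive.
Import Order.TTheory GRing.Theory Num.Theory.
Local Open Scope ring_scope.

Section WVG.
Variable R : realDomainType.

Definition is_wvg (n : nat) (q : R) (w : 'I_n -> R) : Prop :=
  (forall j, 0 <= w j) /\ 0 < q /\ q <= \sum_(j < n) w j.

Definition winning (n : nat) (q : R) (w : 'I_n -> R) (S : {set 'I_n}) : bool :=
  q <= \sum_(j in S) w j.

Definition critical (n : nat) (q : R) (w : 'I_n -> R) (j : 'I_n)
    (S : {set 'I_n}) : bool :=
  winning q w S && ~~ winning q w (S :\ j).

Definition eta_wvg (n : nat) (q : R) (w : 'I_n -> R) (j : 'I_n) : nat :=
  #|[set S : {set 'I_n} | critical q w j S]|.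

(* Splitting player i into two sub-players with weights a and b:
   the new game has players 'I_n.+1; sub-player i' is lift ord_max i
   (same index as i) with weight a, sub-player i'' is the new player
   ord_max with weight b; every other player j is lift ord_max j and
   keeps weight w j. *)
Definition split_weights (n : nat) (w : 'I_n -> R) (i : 'I_n) (a b : R)
    : 'I_n.+1 -> R :=
  fun k => match unlift ord_max k with
           | Some j => if j == i then a else w j
           | None => b
           end.
End WVG.

From HB Require Import structures.
From mathcomp Require Import all_boot all_order all_algebra.
Import Order.TTheory GRing.Theory Num.Theory.
Local Open Scope ring_scope.

(* Every coalition of
   v' is [split_coalition S c1 c2]: a coalition S of v with membership of i
   forgotten, together with the membership bits c1 of i' and c2 of i''; its
   weight is [c1] a + [c2] b + w(S \ i).
   1. Parametrising the coalitions of v' by pairs (S, c) in two ways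
      (c1 := i \in S or c2 := i \in S), both eta's of the sub-players become
      sums over S of a two-term sum over c; for each S, the four resulting
      indicators add up to twice [i critical in S] (a Boolean count using
      only monotonicity of the weight in a, b >= 0).
   2. The injection S |-> "S with i replaced by both i', i''" preserves total
      weight and commutes with removing x <> i, so it maps coalitions where x
      is critical in v to coalitions where x is critical in v'. *)

Lemma critical_notin (R : realDomainType) (m : nat) (q : R) (w : 'I_m -> R)
    (j : 'I_m) (S : {set 'I_m}) :
  j \notin S -> critical q w j S = false.
Proof.
move=> jS; rewrite /critical.
have -> : S :\ j = S.
  by apply/setP => k; rewrite !inE; case: eqP => // ->; rewrite (negbTE jS).
by rewrite andbN.
Qed.

Lemma card_set_bij {T U : finType} (P : pred T) {f : U -> T} :
  bijective f -> #|[set x | P x]| = (\sum_u (P (f u) : nat))%N.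
Proof.
move=> f_bij; rewrite -sum1_card big_mkcond /=.
rewrite (reindex f (onW_bij _ f_bij)) /=.
by apply: eq_bigr => u _; rewrite inE; case: (P (f u)).
Qed.

Section Splitting.
Variables (R : realDomainType) (n : nat) (q : R) (w : 'I_n -> R).
Variables (i : 'I_n) (a b : R).

Local Notation w' := (split_weights w i a b).
Local Notation om := (@ord_max n).

Definition split_coalition (S : {set 'I_n}) (c1 c2 : bool) : {set 'I_n.+1} :=
  [set k | match unlift om k with
           | Some j => if j == i then c1 else j \in S
           | None => c2 end].

Lemma split_coalition_lift S c1 c2 j :
  (lift om j \in split_coalition S c1 c2) = if j == i then c1 else j \in S.
Proof. by rewrite inE liftK. Qed.

Lemma split_coalition_max S c1 c2 : (om \in split_coalition S c1 c2) = c2.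
Proof. by rewrite inE unlift_none. Qed.

Lemma split_weights_lift j : w' (lift om j) = if j == i then a else w j.
Proof. by rewrite /split_weights liftK. Qed.

Lemma split_weights_max : w' om = b.
Proof. by rewrite /split_weights unlift_none. Qed.

Lemma lift_max_widen (j : 'I_n) : lift om j = widen_ord (leqnSn n) j.
Proof. by apply: val_inj; rewrite /= /bump leqNgt ltn_ord. Qed.

Lemma sum_split_coalition S c1 c2 :
  \sum_(k in split_coalition S c1 c2) w' k =
  (if c1 then a else 0) + (if c2 then b else 0) + \sum_(j in S :\ i) w j.
Proof.
rewrite big_mkcond big_ord_recr /= split_coalition_max split_weights_max.
under eq_bigr => j _ do
  rewrite -lift_max_widen split_coalition_lift split_weights_lift.
rewrite (bigD1 i) //= eqxx [\sum_(j in S :\ i) w j]big_mkcond /=.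
rewrite [\sum_j (if j \in S :\ i then _ else _)](bigD1 i) //= !inE eqxx add0r.
rewrite addrAC; congr (_ + _ + _); apply: eq_bigr => j ji.
by rewrite !inE (negbTE ji).
Qed.

Lemma split_coalition_D1_lift S c1 c2 :
  split_coalition S c1 c2 :\ lift om i = split_coalition S false c2.
Proof.
apply/setP => k; rewrite !inE; case: (unliftP om k) => [j ->|->].
  by rewrite (inj_eq (@lift_inj _ om)); case: eqP.
by rewrite neq_lift.
Qed.

Lemma split_coalition_D1_max S c1 c2 :
  split_coalition S c1 c2 :\ om = split_coalition S c1 false.
Proof.
apply/setP => k; rewrite !inE; case: (unliftP om k) => [j ->|->].
  by rewrite eq_sym neq_lift.
by rewrite eqxx.
Qed.

Lemma restrict_split_coalition S c :
  [set j : 'I_n | lift om j \in split_coalition S (i \in S) c] = S.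
Proof.
by apply/setP => j; rewrite inE split_coalition_lift; case: eqP => // ->.
Qed.

Lemma split_coalition_bij1 :
  bijective (fun p : {set 'I_n} * bool => split_coalition p.1 (i \in p.1) p.2).
Proof.
exists (fun T : {set 'I_n.+1} => ([set j : 'I_n | lift om j \in T], om \in T)).
  by case=> S c /=; rewrite restrict_split_coalition split_coalition_max.
move=> T /=; apply/setP => k; case: (unliftP om k) => [j ->|->].
  by rewrite split_coalition_lift !inE; case: eqP => // ->.
by rewrite split_coalition_max.
Qed.

Lemma split_coalition_bij2 :
  bijective (fun p : {set 'I_n} * bool => split_coalition p.1 p.2 (i \in p.1)).
Proof.
exists (fun T : {set 'I_n.+1} => ([set j : 'I_n | if j == i then om \in T
                                  else lift om j \in T], lift om i \in T)).
  case=> S c /=; rewrite split_coalition_lift eqxx; congr pair.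
  apply/setP => j; rewrite inE split_coalition_max split_coalition_lift.
  by case: eqP => // ->.
move=> T /=; apply/setP => k; case: (unliftP om k) => [j ->|->].
  by rewrite split_coalition_lift !inE; case: eqP => // ->.
by rewrite split_coalition_max inE eqxx.
Qed.

Lemma eta_sub1_sum :
  eta_wvg q w' (lift om i) =
  (\sum_S \sum_c
     (critical q w' (lift om i) (split_coalition S (i \in S) c) : nat))%N.
Proof. by rewrite /eta_wvg (card_set_bij _ split_coalition_bij1) pair_bigA. Qed.

Lemma eta_sub2_sum :
  eta_wvg q w' om =
  (\sum_S \sum_c (critical q w' om (split_coalition S c (i \in S)) : nat))%N.
Proof. by rewrite /eta_wvg (card_set_bij _ split_coalition_bij2) pair_bigA. Qed.

(* Boolean core of the count: with p0 <= pa, pb <= pab (the winning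
   indicators of W, W + a, W + b, W + a + b), the four criticality
   indicators of the sub-players add up to twice that of i. *)
Lemma critical_bool_count (p0 pa pb pab : bool) :
  (p0 ==> pa) -> (p0 ==> pb) -> (pa ==> pab) -> (pb ==> pab) ->
  ((pab && ~~ pb) + (pa && ~~ p0) + ((pab && ~~ pa) + (pb && ~~ p0)) =
   2 * (pab && ~~ p0))%N.
Proof. by case: p0; case: pa; case: pb; case: pab. Qed.

Lemma split_critical_count S :
  0 <= a -> 0 <= b -> a + b = w i ->
  ((\sum_c (critical q w' (lift om i) (split_coalition S (i \in S) c) : nat))
   + \sum_c (critical q w' om (split_coalition S c (i \in S)) : nat) =
   2 * critical q w i S)%N.
Proof.
move=> a0 b0 ab; rewrite !big_bool /=.
have [iS|iNS] := boolP (i \in S); last first.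
  by rewrite !critical_notin // ?split_coalition_lift ?split_coalition_max
    ?eqxx ?(negbTE iNS).
rewrite /critical /winning !split_coalition_D1_lift !split_coalition_D1_max.
rewrite !sum_split_coalition (big_setD1 _ iS) /= ?addr0 ?add0r -ab.
by apply: critical_bool_count; apply/implyP => h; apply: le_trans h _;
  rewrite ?lerD2r ?lerDr ?lerDl.
Qed.

Definition merge_coalition (S : {set 'I_n}) : {set 'I_n.+1} :=
  split_coalition S (i \in S) (i \in S).

Lemma merge_coalition_inj : injective merge_coalition.
Proof.
move=> S1 S2 E.
by rewrite -(restrict_split_coalition S1 (i \in S1)) -/(merge_coalition S1) E
  restrict_split_coalition.
Qed.

Lemma sum_merge_coalition S : a + b = w i ->
  \sum_(k in merge_coalition S) w' k = \sum_(j in S) w j.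
Proof.
move=> ab; rewrite sum_split_coalition; have [iS|iNS] := boolP (i \in S).
  by rewrite (big_setD1 _ iS) ab.
have -> : S :\ i = S.
  by apply/setP => k; rewrite !inE; case: eqP => // ->; rewrite (negbTE iNS).
by rewrite !add0r.
Qed.

Lemma merge_coalition_D1 S x : x != i ->
  merge_coalition S :\ lift om x = merge_coalition (S :\ x).
Proof.
move=> xi; apply/setP => k; rewrite !inE; case: (unliftP om k) => [j ->|->].
  by rewrite (inj_eq (@lift_inj _ om)) !inE; case: (j =P i) => [->|].
by rewrite neq_lift eq_sym xi.
Qed.

Lemma critical_merge_coalition S x : a + b = w i -> x != i ->
  critical q w' (lift om x) (merge_coalition S) = critical q w x S.
Proof.
move=> ab xi.
by rewrite /critical /winning merge_coalition_D1 // !sum_merge_coalition.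
Qed.

End Splitting.

Theorem mainTheorem2 (R : realDomainType) (n : nat) (q : R) (w : 'I_n -> R)
    (i : 'I_n) (a b : R) :
  is_wvg q w -> 0 <= a -> 0 <= b -> a + b = w i ->
  (eta_wvg q (split_weights w i a b) (lift ord_max i)
     + eta_wvg q (split_weights w i a b) ord_max = 2 * eta_wvg q w i)%N /\
  (forall x : 'I_n, x != i ->
     (eta_wvg q w x <= eta_wvg q (split_weights w i a b) (lift ord_max x))%N).
Proof.
move=> _ a0 b0 ab; split.
  rewrite eta_sub1_sum eta_sub2_sum -big_split /eta_wvg -sum1_card.
  rewrite big_distrr [RHS]big_mkcond; apply: eq_bigr => S _ /=.
  by rewrite split_critical_count // inE muln1; case: critical.
move=> x xi; rewrite /eta_wvg -(card_imset _ (merge_coalition_inj n i)).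
apply/subset_leq_card/subsetP => T /imsetP [S]; rewrite inE => cS ->.
by rewrite inE critical_merge_coalition.
Qed.
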